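(* Let $(u_k)_{k\ge1}$ be defined by $u_k=k$ for $k\in\{1,2,3\}$ and $u_k=2u_{k-2}$ for $k\ge4$. For $k\ge1$, let $\omega_k$ be the largest integer such that every 1-dimensional error pattern at level $k$ with at most $\omega_k$ edges is decoded correctly by the 1-dimensional renormalisation decoder. Then $\omega_k=u_k-1$ for all $k\ge1$.
   Context: 1-dimensional model. For $j\ge0$, the line at level $j$ is the cycle with vertex set $\mathbb{Z}/2^j\mathbb{Z}$ and edges $\epsilon_v=\{v,v+1\}$, $v\in\mathbb{Z}/2^j\mathbb{Z}$ (for $j=0$ it is a single vertex with one loop edge). A 1-dimensional error pattern at level $j$ is a subset of these edges; its weight is its number of edges; its syndrome is the set of vertices incident to an odd number of its edges (a loop counts twice). At level $j+1$, the blocks are the pairs consisting of the left edge $\{2m,2m+1\}$ and right edge $\{2m+1,2m+2\}$, $m\in\mathbb{Z}/2^j\mathbb{Z}$; block $m$ corresponds to edge $\{m,m+1\}$ at level $j$. One reduction stage applied to a pattern $\mathbf{f}$ at level $j+1$ with syndrome $S$: (a) for every block, if both endpoints $2m+1,2m+2$ of its right edge are in $S$, flip (add mod 2) the right edge and remove both vertices from $S$; (b) then, for every block, if its middle vertex $2m+1$ is still in $S$, flip its left edge. In the resulting pattern $\mathbf{f}'$ each block contains $0$ or $2$ edges; the image of $\mathbf{f}$ is the pattern at level $j$ containing edge $\{m,m+1\}$ iff block $m$ is contained in $\mathbf{f}'$. A pattern $\mathbf{f}$ at level $j+1$ is a (1-dimensional) preimage of a pattern $\mathbf{g}$ at level $j$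 if the image of $\mathbf{f}$ is $\mathbf{g}$. The 1-dimensional decoder applies $k$ successive reduction stages to a pattern at level $k$, ending with a pattern at level $0$ that is either empty or the loop edge; the original pattern is decoded correctly iff the final pattern is empty. (This is exactly the behaviour of the two-dimensional renormalisation decoder of the toric code on $\mathbb{Z}/2^k\times\mathbb{Z}/2^k$ restricted to errors supported on the horizontal line $\{(x,0)\}$, where being wrongly decoded means that error plus correction is that whole homologically non-trivial line.) *)

From mathcomp Require Import all_boot.
Set Implicit Arguments. Unset Strict Implicit. Unset Printing Implicit Defensive.

(* Level j: cycle with vertex set Z/2^j, represented as 'I_(2^j).
   Edge indexed by v : 'I_(2^j) is eps_v = {v, v+1}.
   A pattern is a set of edge indices. *)

Lemma pow2_gt0 (j : nat) : 0 < 2 ^ j.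
Proof. by rewrite expn_gt0. Qed.

Definition vtx (j n : nat) : 'I_(2 ^ j) := Ordinal (ltn_pmod n (pow2_gt0 j)).

Definition pattern (j : nat) := {set 'I_(2 ^ j)}.

(* number of edges of f incident to w, a loop counting twice:
   sum over edges v in f of the number of endpoints (v and v+1) equal to w *)
Definition incidence (j : nat) (f : pattern j) (w : 'I_(2 ^ j)) : nat :=
  \sum_(v in f) ((vtx j v == w) + (vtx j v.+1 == w)).

Definition syndrome (j : nat) (f : pattern j) : {set 'I_(2 ^ j)} :=
  [set w | odd (incidence f w)].

Definition flip (j : nat) (f E : pattern j) : pattern j :=
  [set e | (e \in f) (+) (e \in E)].

(* One reduction stage: pattern at level j+1 -> its image at level j.
   Block m (m : 'I_(2^j)) = left edge {2m,2m+1} (index 2m) and right edge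
   {2m+1,2m+2} (index 2m+1); middle vertex 2m+1. *)
Definition reduce (j : nat) (f : pattern j.+1) : pattern j :=
  let S := syndrome f in
  let A := [set m : 'I_(2 ^ j) |
             (vtx j.+1 (2 * m + 1) \in S) && (vtx j.+1 (2 * m + 2) \in S)] in
  let f1 := flip f [set vtx j.+1 (2 * m + 1) | m : 'I_(2 ^ j) in A] in
  let S1 := S :\: \bigcup_(m : 'I_(2 ^ j) | m \in A) [set vtx j.+1 (2 * m + 1); vtx j.+1 (2 * m + 2)] in
  let B := [set m : 'I_(2 ^ j) | vtx j.+1 (2 * m + 1) \in S1] in
  let f2 := flip f1 [set vtx j.+1 (2 * m) | m : 'I_(2 ^ j) in B] in
  [set m : 'I_(2 ^ j) | (vtx j.+1 (2 * m) \in f2) && (vtx j.+1 (2 * m + 1) \in f2)].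

Fixpoint decode (k : nat) : pattern k -> pattern 0 :=
  match k return pattern k -> pattern 0 with
  | 0 => fun f => f
  | k'.+1 => fun f => decode (reduce f)
  end.

Definition decoded_correctly (k : nat) (f : pattern k) : Prop := decode f = set0.

Definition corrects_upto (k w : nat) : Prop :=
  forall f : pattern k, #|f| <= w -> decoded_correctly f.

Definition is_largest (P : nat -> Prop) (w : nat) : Prop :=
  P w /\ forall w', P w' -> w' <= w.

(* u_1=1, u_2=2, u_3=3, u_k = 2 u_{k-2} for k >= 4 (u_0 unused) *)
Fixpoint u (k : nat) : nat :=
  match k with
  | 0 => 0
  | 1 => 1
  | 2 => 2
  | 3 => 3
  | k'.+2 => 2 * u k'
  end.

(* One reduction stage acts on edge indicators as a majority vote: edge m of
   the image is present iff at least two of the edges 2m, 2m+1, 2m+2 are. So a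
   pattern at level k is decoded wrongly iff the (k-1)-fold iterated majority
   of its periodic indicator holds at 0, and this vote only reads a window of
   2^k - 1 consecutive edges.
   Two iterations form a majority of three majorities of seven overlapping
   sub-votes. Whenever it holds, two sub-votes at distance at least 2 hold, and
   their windows are disjoint: the weight needed doubles every two levels,
   which is the recursion of u. Conversely, if A, B and their splice (B moved
   left and A moved right by 2^j) all win, placing B and A side by side makes
   three consecutive overlapping sub-votes win; iterating this from small
   cases yields wrongly decoded patterns of weight exactly u_k. *)

From mathcomp Require Import all_boot zify.
Set Implicit Arguments. Unset Strict Implicit. Unset Printing Implicit Defensive.

Definition majority (a b c : bool) : bool := [|| a && b, b && c | a && c].

Definition coarsen (g : nat -> bool) (m : nat) : bool :=
  majority (g (2 * m)) (g (2 * m + 1)) (g (2 * m + 2)).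

(* [vote j g p] only reads [g] on the window [p 2^j, p 2^j + 2^(j+1) - 1). *)
Definition vote (j : nat) (g : nat -> bool) : nat -> bool := iter j coarsen g.

Definition majority7 (a : nat -> bool) : bool :=
  majority (majority (a 0) (a 1) (a 2)) (majority (a 2) (a 3) (a 4))
           (majority (a 4) (a 5) (a 6)).

Lemma coarsen_mono (g h : nat -> bool) : subpred g h -> subpred (coarsen g) (coarsen h).
Proof.
move=> gh m; rewrite /coarsen /majority.
by case/or3P => /andP [/gh -> /gh ->]; rewrite ?orbT.
Qed.

Lemma vote_mono j (g h : nat -> bool) : subpred g h -> subpred (vote j g) (vote j h).
Proof. by move=> gh; elim: j => [|j IHj] //; apply: coarsen_mono. Qed.

Lemma eq_vote j (g h : nat -> bool) : g =1 h -> vote j g =1 vote j h.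
Proof. by move=> gh p; apply/idP/idP; apply: vote_mono => i; rewrite gh. Qed.

Lemma voteSr j (g : nat -> bool) : vote j.+1 g = vote j (coarsen g).
Proof. exact: iterSr. Qed.

Lemma voteSS j (g : nat -> bool) p :
  vote j.+2 g p = majority7 (fun q => vote j g (4 * p + q)).
Proof.
by rewrite /= /coarsen /majority7; congr majority; congr majority; congr (vote j g); lia.
Qed.

Lemma vote_shift j (g : nat -> bool) s p :
  vote j (fun i => g (i + s * 2 ^ j)) p = vote j g (p + s).
Proof.
elim: j s p => [|j IHj] s p /=; first by rewrite muln1.
have shift2 q : vote j (fun i => g (i + s * 2 ^ j.+1)) q = vote j g (q + 2 * s).
  by rewrite -IHj; apply: eq_vote => i; rewrite expnS mulnCA mulnA.
by rewrite /coarsen !shift2; congr majority; congr (vote j g); lia.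
Qed.

Lemma vote_translate j (g h : nat -> bool) q :
  (forall x, g x -> h (x + q * 2 ^ j)) -> vote j g 0 -> vote j h q.
Proof. by move=> gh /(vote_mono gh); rewrite vote_shift. Qed.

Lemma vote_top k (g : nat -> bool) :
  (forall i, g (i + 2 ^ k.+1) = g i) -> vote k.+1 g 0 = vote k g 0.
Proof.
move=> g_per; have vote2 : vote k g 2 = vote k g 0.
  by rewrite -[2]add0n -vote_shift; apply: eq_vote => i; rewrite -expnS g_per.
rewrite /= /coarsen /= vote2 /majority.
by case: (vote k g 0); case: (vote k g 1).
Qed.

Lemma count_iota_shift (g : nat -> bool) a n :
  count g (iota a n) = count (fun i => g (a + i)) (iota 0 n).
Proof. by rewrite -[in LHS](addn0 a) iotaDl count_map. Qed.

Lemma count_iota_sub (g : nat -> bool) a n b m :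
  a <= b -> b + m <= a + n -> count g (iota b m) <= count g (iota a n).
Proof.
move=> le_ab le_end; have -> : n = (b - a) + (m + (a + n - (b + m))) by lia.
by rewrite !iotaD !count_cat subnKC // addnCA leq_addr.
Qed.

Lemma count_iota_disjoint (g : nat -> bool) a n a1 n1 a2 n2 :
  a <= a1 -> a1 + n1 <= a2 -> a2 + n2 <= a + n ->
  count g (iota a1 n1) + count g (iota a2 n2) <= count g (iota a n).
Proof.
move=> le_a le_12 le_end; pose n12 := a2 + n2 - (a1 + n1).
apply: (@leq_trans (count g (iota a1 (n1 + n12)))); last by apply: count_iota_sub; lia.
by rewrite iotaD count_cat leq_add2l; apply: count_iota_sub; lia.
Qed.

Lemma majority_count a b c : majority a b c -> 2 <= a + b + c.
Proof. by case: a; case: b; case: c. Qed.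

Lemma majority7_count (a : nat -> bool) : majority7 a -> 3 <= count a (iota 0 7).
Proof.
rewrite /majority7 /=.
by case: (a 0); case: (a 1); case: (a 2); case: (a 3);
  case: (a 4); case: (a 5); case: (a 6).
Qed.

Lemma majority7_spread (a : nat -> bool) :
  majority7 a -> exists i i', [/\ i.+1 < i', i' <= 6, a i & a i'].
Proof.
rewrite /majority7 /majority.
case a0: (a 0); case a1: (a 1); case a2: (a 2); case a3: (a 3);
  case a4: (a 4); case a5: (a 5); case a6: (a 6) => //= _;
  by [exists 0, 2 | exists 0, 3 | exists 0, 4 | exists 0, 5 | exists 0, 6
     | exists 1, 3 | exists 1, 4 | exists 1, 5 | exists 1, 6 | exists 2, 4
     | exists 2, 5 | exists 2, 6 | exists 3, 5 | exists 3, 6 | exists 4, 6].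
Qed.

Lemma vote_weight j (g : nat -> bool) p :
  vote j g p -> u j.+1 <= count g (iota (p * 2 ^ j) (2 ^ j.+1).-1).
Proof.
elim/ltn_ind: j g p => -[|[|[|i]]] IH g p.
- by rewrite muln1 /=; case: (g p).
- rewrite expn1 mulnC count_iota_shift /= !addn0 => /majority_count.
  by rewrite addnA.
- have -> : p * 2 ^ 2 = 4 * p by rewrite mulnC.
  by rewrite voteSS count_iota_shift; apply: majority7_count.
rewrite voteSS => /majority7_spread [q [q' [lt_qq' le_q' vq vq']]].
have lt_i : i.+1 < i.+3 by [].
have -> : u i.+4 = u i.+2 + u i.+2 by rewrite addnn -mul2n.
(* the windows of the sub-votes at positions 4p+q and 4p+q' are disjoint *)
apply: leq_trans (leq_add (IH _ lt_i _ _ vq) (IH _ lt_i _ _ vq')) _.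
have : 0 < 2 ^ i by rewrite expn_gt0.
rewrite !expnS; set U := 2 ^ i => U_gt0.
apply: count_iota_disjoint; nia.
Qed.

Definition splice j (B A : seq nat) : nat -> bool :=
  fun i => (i + 2 ^ j \in B) || (i \in map (addn (2 ^ j)) A).

Definition glueable j (A B : seq nat) : Prop :=
  [/\ vote j [in A] 0, vote j [in B] 0 & vote j (splice j B A) 0].

Definition glue j (A B : seq nat) : seq nat * seq nat :=
  (map (addn (2 ^ j)) B ++ map (addn (3 * 2 ^ j)) A,
   map (addn (3 * 2 ^ j)) B ++ map (addn (5 * 2 ^ j)) A).

Lemma mem_map_addn d (s : seq nat) x y : x \in s -> y = d + x -> y \in map (addn d) s.
Proof. by move=> sx ->; rewrite mem_map //; apply: addnI. Qed.

Lemma majority7_123 (a : nat -> bool) : a 1 -> a 2 -> a 3 -> majority7 a.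
Proof. by rewrite /majority7 /majority => -> -> ->; rewrite !orbT. Qed.

Lemma majority7_345 (a : nat -> bool) : a 3 -> a 4 -> a 5 -> majority7 a.
Proof. by rewrite /majority7 /majority => -> -> ->; rewrite !orbT. Qed.

Lemma majority7_0156 (a : nat -> bool) : a 0 -> a 1 -> a 5 -> a 6 -> majority7 a.
Proof. by rewrite /majority7 /majority => -> -> -> ->; rewrite !orbT. Qed.

(* At level j, the glued pattern A' reads B, the splice and A at positions
   1, 2, 3; B' reads them at positions 3, 4, 5; and the new splice reads the
   splice, A, B and the splice at positions 0, 1, 5, 6. *)
Lemma glueable_glue j A B :
  glueable j A B -> glueable j.+2 (glue j A B).1 (glue j A B).2.
Proof.
case=> vA vB vS; set A' := (glue j A B).1; set B' := (glue j A B).2; set U := 2 ^ j.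
have shift q (g h : nat -> bool) :
    (forall x, g x -> h (x + q * U)) -> vote j g 0 -> vote j h (4 * 0 + q).
  by move=> gh; rewrite muln0 add0n; apply: vote_translate.
have inA'_B x y : x \in B -> y = U + x -> y \in A'.
  by move=> xB ey; rewrite /= mem_cat (mem_map_addn xB ey).
have inA'_A x y : x \in A -> y = 3 * U + x -> y \in A'.
  by move=> xA ey; rewrite /= mem_cat (mem_map_addn xA ey) orbT.
have inA'_S x y : splice j B A x -> y = 2 * U + x -> y \in A'.
  move=> /orP [xB | /mapP [a aA ->]] ->; [apply: inA'_B xB _ | apply: inA'_A aA _]; lia.
have inB'_B x y : x \in B -> y = 3 * U + x -> y \in B'.
  by move=> xB ey; rewrite /= mem_cat (mem_map_addn xB ey).
have inB'_A x y : x \in A -> y = 5 * U + x -> y \in B'.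
  by move=> xA ey; rewrite /= mem_cat (mem_map_addn xA ey) orbT.
have inB'_S x y : splice j B A x -> y = 4 * U + x -> y \in B'.
  move=> /orP [xB | /mapP [a aA ->]] ->; [apply: inB'_B xB _ | apply: inB'_A aA _]; lia.
have U4 : 2 ^ j.+2 = 4 * U by rewrite !expnS mulnA.
split; rewrite voteSS.
- apply: majority7_123.
  + by apply: shift vB => x xB; apply: inA'_B xB _; lia.
  + by apply: shift vS => x xS; apply: inA'_S xS _; lia.
  + by apply: shift vA => x xA; apply: inA'_A xA _; lia.
- apply: majority7_345.
  + by apply: shift vB => x xB; apply: inB'_B xB _; lia.
  + by apply: shift vS => x xS; apply: inB'_S xS _; lia.
  + by apply: shift vA => x xA; apply: inB'_A xA _; lia.
- apply: majority7_0156.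
  + by apply: shift vS => x xS; apply/orP; left; apply: inB'_S xS _; lia.
  + by apply: shift vA => x xA; apply/orP; left; apply: inB'_A xA _; lia.
  + apply: shift vB => x xB; apply/orP; right.
    by apply: mem_map_addn (inA'_B _ _ xB erefl) _; lia.
  + apply: shift vS => x xS; apply/orP; right.
    by apply: mem_map_addn (inA'_S _ _ xS erefl) _; lia.
Qed.

Fixpoint bad_pair (n : nat) : seq nat * seq nat :=
  match n with
  | 0 => ([:: 0; 2], [:: 0; 2])
  | 1 => ([:: 0; 2; 4], [:: 2; 4; 6])
  | n'.+2 => glue n'.+1 (bad_pair n').1 (bad_pair n').2
  end.

Lemma bad_pair_spec n :
  [/\ glueable n.+1 (bad_pair n).1 (bad_pair n).2,
      size (bad_pair n).1 = u n.+2 & size (bad_pair n).2 = u n.+2].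
Proof.
elim/ltn_ind: n => -[|[|n]] IH; try by split; vm_compute.
have [glAB sA sB] := IH n (leqnSn n.+1).
split; first exact: glueable_glue.
all: by rewrite /= size_cat !size_map sA sB addnn -mul2n.
Qed.

Lemma u_gt0 k : 0 < u k.+1.
Proof.
elim/ltn_ind: k => -[|[|[|k]]] IH //.
by rewrite /= muln_gt0 (IH k.+1).
Qed.

Definition has_edge (j : nat) (f : pattern j) (i : nat) : bool := vtx j i \in f.

Lemma vtx_ord j (v : 'I_(2 ^ j)) : vtx j v = v.
Proof. by apply: val_inj; apply: modn_small. Qed.

Lemma has_edge_mod j (f : pattern j) x : has_edge f (x %% 2 ^ j) = has_edge f x.
Proof. by rewrite /has_edge; congr (_ \in f); apply: val_inj; rewrite /= modn_mod. Qed.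

Lemma has_edge_periodic j (f : pattern j) x : has_edge f (x + 2 ^ j) = has_edge f x.
Proof. by rewrite -has_edge_mod modnDr has_edge_mod. Qed.

Lemma sum_pred1_in (T : finType) (A P : pred T) (c : T) :
  P =1 pred1 c -> \sum_(v in A) P v = (c \in A).
Proof.
move=> Pc; rewrite big_mkcond
  (eq_bigr (fun v => if P v then nat_of_bool (v \in A) else 0)).
  by rewrite -big_mkcond; apply: big_pred1.
by move=> v _; rewrite Pc /=; case: (v \in A); case: (v == c).
Qed.

Lemma vtx_succ_eq j (v : 'I_(2 ^ j)) x : (vtx j v.+1 == vtx j (x + 1)) = (v == vtx j x).
Proof.
apply/eqP/eqP => [/(congr1 val) /= e | ->]; apply: val_inj => /=.
  rewrite -[val v](modn_small (ltn_ord v)); apply/eqP.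
  by rewrite -(eqn_modDr 1) addn1 e.
by rewrite -addn1 modnDml.
Qed.

Lemma incidence_succ j (f : pattern j) x :
  incidence f (vtx j (x + 1)) = has_edge f (x + 1) + has_edge f x.
Proof.
rewrite /incidence big_split /= (sum_pred1_in _ (c := vtx j (x + 1))).
  by rewrite (sum_pred1_in _ (c := vtx j x)) // => v; apply: vtx_succ_eq.
by move=> v; rewrite /= vtx_ord.
Qed.

Lemma odd_incidence_succ j (f : pattern j) x :
  odd (incidence f (vtx j (x + 1))) = has_edge f (x + 1) (+) has_edge f x.
Proof. by rewrite incidence_succ oddD !oddb. Qed.

Lemma odd_vtx j x y : vtx j.+1 x = vtx j.+1 y -> odd x = odd y.
Proof.
have even_mod : odd (2 ^ j.+1) = false by rewrite oddX.
by move/(congr1 val) => /= e; rewrite -(odd_mod x even_mod) -(odd_mod y even_mod) e.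
Qed.

Lemma vtx_block_inj j (m m' : 'I_(2 ^ j)) c c' : c < 2 -> c' < 2 ->
  vtx j.+1 (2 * m + c) = vtx j.+1 (2 * m' + c') -> m = m' /\ c = c'.
Proof.
move=> c2 c'2 /(congr1 val) /=; have := ltn_ord m; have := ltn_ord m'.
rewrite expnS => lt_m' lt_m; rewrite !modn_small; try lia.
by move=> e; split; [apply: val_inj => /= | ]; lia.
Qed.

Lemma mem_block_imset j (S : {pred 'I_(2 ^ j)}) (m : 'I_(2 ^ j)) c c' : c < 2 -> c' < 2 ->
  (vtx j.+1 (2 * m + c) \in [set vtx j.+1 (2 * m' + c') | m' : 'I_(2 ^ j) in S])
  = (c == c') && (m \in S).
Proof.
move=> c2 c'2; apply/imsetP/andP => [[m' Sm' /vtx_block_inj [] // -> ->] // |].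
by case=> /eqP <- Sm; exists m.
Qed.

Lemma mem_cover_right_edges j (A : {set 'I_(2 ^ j)}) (m : 'I_(2 ^ j)) :
  (vtx j.+1 (2 * m + 1) \in
     \bigcup_(m' in A) [set vtx j.+1 (2 * m' + 1); vtx j.+1 (2 * m' + 2)]) = (m \in A).
Proof.
apply/bigcupP/idP => [[m' Am'] | Am]; last by exists m; rewrite ?inE ?eqxx.
rewrite !inE => /orP [/eqP /vtx_block_inj [] // -> // | /eqP /odd_vtx].
by rewrite (oddD (2 * m)) (oddD (2 * m')) !oddM.
Qed.

Lemma mem_reduce j (f : pattern j.+1) (m : 'I_(2 ^ j)) :
  (m \in reduce f) = coarsen (has_edge f) m.
Proof.
rewrite /reduce /flip !inE.
have dbl0 (S : {pred 'I_(2 ^ j)}) : [set vtx j.+1 (2 * m') | m' : 'I_(2 ^ j) in S] =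
  [set vtx j.+1 (2 * m' + 0) | m' : 'I_(2 ^ j) in S].
  by apply: eq_imset => m'; rewrite addn0.
have e0 : vtx j.+1 (2 * m) = vtx j.+1 (2 * m + 0) by rewrite addn0.
rewrite !dbl0 e0 !mem_block_imset //= !inE mem_cover_right_edges !inE -e0.
have e2 : 2 * m + 2 = 2 * m + 1 + 1 by rewrite -addnA.
rewrite e2 !odd_incidence_succ /coarsen /has_edge -e2.
by case: (vtx _ (2 * m) \in f); case: (vtx _ (2 * m + 1) \in f);
  case: (vtx _ (2 * m + 2) \in f).
Qed.

Lemma has_edge_reduce j (f : pattern j.+1) : has_edge (reduce f) =1 coarsen (has_edge f).
Proof.
move=> n; rewrite /has_edge mem_reduce /coarsen /=.
have dbl_mod c : has_edge f (2 * (n %% 2 ^ j) + c) = has_edge f (2 * n + c).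
  by rewrite -has_edge_mod muln_modr -expnS modnDml has_edge_mod.
by rewrite !dbl_mod -[2 * _]addn0 dbl_mod addn0.
Qed.

Lemma has_edge_decode k (f : pattern k) : has_edge (decode f) =1 vote k (has_edge f).
Proof.
elim: k f => [|k IHk] f p //.
by rewrite IHk voteSr; apply: eq_vote; apply: has_edge_reduce.
Qed.

Lemma count_has_edge j (f : pattern j) : count (has_edge f) (iota 0 (2 ^ j)) = #|f|.
Proof.
rewrite -val_enum_ord count_map -sum1_card -sum1_count big_enum_cond /=.
by apply: eq_bigl => v; rewrite /= /has_edge vtx_ord.
Qed.

Lemma pattern0_eq0 (S : pattern 0) : (S == set0) = ~~ has_edge S 0.
Proof.
apply/eqP/idP => [-> | S0]; first by rewrite /has_edge inE.
apply/setP => v; rewrite inE; apply/negbTE.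
have -> : v = vtx 0 0 by apply: val_inj; case: v => -[].
exact: S0.
Qed.

Lemma decoded_correctlyE k (f : pattern k.+1) :
  decoded_correctly f <-> ~~ vote k (has_edge f) 0.
Proof.
rewrite /decoded_correctly -(vote_top (has_edge_periodic f)) -has_edge_decode.
by rewrite -pattern0_eq0; split=> /eqP.
Qed.

Lemma exists_bad_pattern j :
  exists f : pattern j.+1, #|f| <= u j.+1 /\ ~ decoded_correctly f.
Proof.
have [W [vW sW]] : exists W : seq nat, vote j [in W] 0 /\ size W = u j.+1.
  case: j => [|n]; first by exists [:: 0].
  by have [[vA _ _] sA _] := bad_pair_spec n; exists (bad_pair n).1.
exists [set x in map (vtx j.+1) W]; split.
  by rewrite cardsE; apply: leq_trans (card_size _) _; rewrite size_map sW.
rewrite decoded_correctlyE; apply/negP; rewrite negbK; apply: vote_mono vW => x xW.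
by rewrite /has_edge inE map_f.
Qed.

Theorem proposition4 (k : nat) :
  1 <= k -> is_largest (corrects_upto k) (u k - 1).
Proof.
case: k => [|j] // _; split=> [f small | w corrects].
- apply/decoded_correctlyE/negP => /vote_weight.
  have := count_iota_sub (has_edge f) (leqnn 0) (leq_pred (2 ^ j.+1)).
  rewrite mul0n count_has_edge => le_card le_u.
  have := u_gt0 j; lia.
- rewrite leqNgt; apply/negP => lt_w.
  have [f [card_f bad]] := exists_bad_pattern j.
  by apply/bad/corrects; lia.
Qed.
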